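(* For all $n\geq 0$, $$d_n=\sum_{k=0}^{n}(-1)^{(n-k)/2}d_{n,k}\,s_k,$$ where $d_{n,k}=\frac{k+1}{n+1}\binom{n+1}{\frac{n-k}{2}}$ if $n-k$ is even and $d_{n,k}=0$ if $n-k$ is odd (terms with $d_{n,k}=0$ are omitted). Moreover, for each $k\geq 0$, $\sum_{n\geq 0}d_{n,k}x^n=x^kC(x^2)^{k+1}$, where $C(x)=\frac{1-\sqrt{1-4x}}{2x}$.
   Context: Steps: $U=(1,1)$, $D=(1,-1)$, $H=(2,0)$. A Dyck path of length $2n$ is a lattice path from $(0,0)$ to $(2n,0)$ with steps $U,D$ never going below the $x$-axis; a Schröder path of length $2n$ is a lattice path from $(0,0)$ to $(2n,0)$ with steps $U,D,H$ never going below the $x$-axis. Such a path is symmetric if it has a vertex with $x$-coordinate $n$ and is invariant under reflection in the line $x=n$ (reversing the step sequence and interchanging $U$ and $D$ gives the same sequence). $d_n$ = number of symmetric Dyck paths of length $2n$, $s_n$ = number of symmetric Schröder paths of length $2n$. *)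

From Stdlib Require Import Reals Arith List Bool.
From Coquelicot Require Import Coquelicot.
Import ListNotations.
Open Scope R_scope.

(* Steps: U = (1,1), D = (1,-1), H = (2,0). *)
Inductive step : Type := U | D | H.

Definition step_eqb (a b : step) : bool :=
  match a, b with U, U | D, D | H, H => true | _, _ => false end.

Definition width (s : step) : nat := match s with U | D => 1 | H => 2 end.

Fixpoint words (m : nat) : list (list step) :=
  match m with
  | O => [ [] ]
  | S m' => map (cons U) (words m') ++ map (cons D) (words m') ++
            match m' with O => [] | S m'' => map (cons H) (words m'') end
  end.

Fixpoint nonneg_ends0 (h : nat) (p : list step) : bool :=
  match p with
  | [] => Nat.eqb h 0
  | U :: q => nonneg_ends0 (S h) q
  | D :: q => match h with O => false | S h' => nonneg_ends0 h' q end
  | H :: q => nonneg_ends0 h q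
  end.

Fixpoint has_vertex_at (n x : nat) (p : list step) : bool :=
  Nat.eqb x n || match p with
                 | [] => false
                 | s :: q => has_vertex_at n (x + width s) q
                 end.

(* reflection in a vertical line: reverse and interchange U and D *)
Definition flip (s : step) : step := match s with U => D | D => U | H => H end.
Definition reflect (p : list step) : list step := rev (map flip p).

Fixpoint list_step_eqb (p q : list step) : bool :=
  match p, q with
  | [], [] => true
  | a :: p', b :: q' => step_eqb a b && list_step_eqb p' q'
  | _, _ => false
  end.

(* symmetric (w.r.t. x = n) path of length 2n; p has width 2n by construction *)
Definition symmetricb (n : nat) (p : list step) : bool :=
  has_vertex_at n 0 p && list_step_eqb (reflect p) p.

Definition schroederb (p : list step) : bool := nonneg_ends0 0 p.
Definition dyckb (p : list step) : bool :=
  nonneg_ends0 0 p && forallb (fun s => negb (step_eqb s H)) p.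

Definition dsym (n : nat) : nat :=
  length (filter (fun p => dyckb p && symmetricb n p) (words (2 * n))).

Definition ssym (n : nat) : nat :=
  length (filter (fun p => schroederb p && symmetricb n p) (words (2 * n))).

Definition dnk (n k : nat) : R :=
  if (k <=? n)%nat && Nat.even (n - k)
  then (INR (k + 1) / INR (n + 1)) * Binomial.C (n + 1) ((n - k) / 2)
  else 0.

(* C(x) = (1 - sqrt(1-4x)) / (2x), extended by its limit C(0) = 1 *)
Definition Ccat (x : R) : R :=
  if Req_EM_T x 0 then 1 else (1 - sqrt (1 - 4 * x)) / (2 * x).

From Pilot Require Import Defs.
From Stdlib Require Import Reals Arith List Bool Lia Lra Permutation FinFun.
From Coquelicot Require Import Coquelicot.
Import ListNotations.
Open Scope R_scope.

(* A symmetric path of length 2n is determined by its left half, a path of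
   width n that stays weakly above the axis but may end at any height.  Let
   D_n(h) and S_k(h) count such Dyck (U, D) and Schroeder (U, D, H) half-paths
   started at height h; then D_{n+1}(h) = D_n(h+1) + D_n(h-1) and
   S_{k+1}(h) = S_k(h+1) + S_k(h-1) + S_{k-1}(h).  The signed ballot numbers
   b(n,k) = (-1)^((n-k)/2) d_{n,k} satisfy b(n+1,k) = b(n,k-1) - b(n,k+1), and
   with this recurrence the H-step term S_{k-1}(h) cancels in
   sum_k b(n+1,k) S_k(h), so that sum_k b(n,k) S_k(h) obeys the Dyck recurrence
   in n; hence it equals D_n(h), and h = 0 gives the identity.

   For the generating function, both F_k = sum_n d_{n,k} x^n and
   G_k = x^k C(x^2)^(k+1) are bounded solutions of
   F_k = [k = 0] + x F_{k-1} + x F_{k+1}, the latter because C = 1 + x^2 C^2.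
   For |x| < 1/2 the difference of two bounded solutions is contracted by the
   factor 2|x| at every step, hence vanishes. *)

Definition total_width (p : list step) : nat := list_sum (map width p).

Lemma total_width_app p q :
  total_width (p ++ q) = (total_width p + total_width q)%nat.
Proof. unfold total_width. rewrite map_app. apply list_sum_app. Qed.

Lemma total_width_cons s p : total_width (s :: p) = (width s + total_width p)%nat.
Proof. reflexivity. Qed.

Lemma in_words m p : In p (words m) <-> total_width p = m.
Proof.
  revert m; induction p as [|s p IH]; intros m.
  - destruct m as [|m]; simpl; [tauto|].
    rewrite !in_app_iff, !in_map_iff.
    split; [|discriminate]. destruct m; simpl; rewrite ?in_map_iff; firstorder discriminate.
  - destruct m as [|m]; simpl.
    + split; [intros [E|[]]; discriminate|]. unfold total_width; destruct s; simpl; lia.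
    + rewrite !in_app_iff, !in_map_iff.
      change (list_sum (map width p)) with (total_width p).
      split.
      * intros [[q [E Hq]]|[[q [E Hq]]|Hq]].
        -- injection E as <- <-. apply IH in Hq. rewrite total_width_cons. simpl. lia.
        -- injection E as <- <-. apply IH in Hq. rewrite total_width_cons. simpl. lia.
        -- destruct m as [|m]; [destruct Hq|].
           apply in_map_iff in Hq. destruct Hq as [q [E Hq]].
           injection E as <- <-. apply IH in Hq. rewrite total_width_cons. simpl. lia.
      * rewrite total_width_cons. destruct s; simpl; intros Hw.
        -- left. exists p. split; [reflexivity|]. apply IH. lia.
        -- right; left. exists p. split; [reflexivity|]. apply IH. lia.
        -- right; right. destruct m as [|m]; [lia|].
           apply in_map_iff. exists p. split; [reflexivity|]. apply IH. lia.
Qed.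

Lemma cons_injective (s : step) : Injective (cons s).
Proof. intros p q E. injection E. auto. Qed.

Lemma NoDup_words m : NoDup (words m).
Proof.
  induction m as [m IH] using lt_wf_ind.
  destruct m as [|m]; [repeat constructor; auto|].
  assert (Hmap : forall s j, (j < S m)%nat -> NoDup (map (cons s) (words j)))
    by (intros s j Hj; apply Injective_map_NoDup; [apply cons_injective|auto]).
  assert (Hhead : forall (s t : step) l l' p,
             s <> t -> In p (map (cons s) l) -> ~ In p (map (cons t) l'))
    by (intros s t l l' p Hst Hp Hp'; apply in_map_iff in Hp as [q [<- _]];
        apply in_map_iff in Hp' as [q' [E _]]; injection E; congruence).
  simpl. apply NoDup_app; [apply Hmap; lia| |].
  - destruct m as [|m]; [rewrite app_nil_r; apply Hmap; lia|].
    apply NoDup_app; [apply Hmap; lia|apply Hmap; lia|].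
    intros p Hp. exact (Hhead Defs.D H _ _ p ltac:(discriminate) Hp).
  - intros p Hp Hp'. apply in_app_iff in Hp' as [Hp'|Hp'].
    + exact (Hhead U Defs.D _ _ p ltac:(discriminate) Hp Hp').
    + destruct m as [|m]; [destruct Hp'|].
      exact (Hhead U H _ _ p ltac:(discriminate) Hp Hp').
Qed.

Definition count_words (P : list step -> bool) (m : nat) : nat :=
  length (filter P (words m)).

Lemma length_filter_map {A B} (P : B -> bool) (f : A -> B) (l : list A) :
  length (filter P (map f l)) = length (filter (fun a => P (f a)) l).
Proof. rewrite filter_map_swap. apply length_map. Qed.

Lemma count_words_S P m :
  count_words P (S m) =
  (count_words (fun u => P (U :: u)) m + count_words (fun u => P (Defs.D :: u)) m +
   match m with O => O | S m' => count_words (fun u => P (H :: u)) m' end)%nat.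
Proof.
  unfold count_words. simpl. rewrite !filter_app, !length_app, !length_filter_map.
  destruct m; [simpl; lia|]. rewrite length_filter_map. lia.
Qed.

Lemma count_words_ext P Q m :
  (forall u, P u = Q u) -> count_words P m = count_words Q m.
Proof. intros HPQ. unfold count_words. erewrite filter_ext; [reflexivity|auto]. Qed.

Lemma count_words_false P m : (forall u, P u = false) -> count_words P m = O.
Proof.
  intros HP. unfold count_words. induction (words m) as [|p l IH]; simpl; auto.
  rewrite HP. exact IH.
Qed.

Lemma has_vertex_at_spec n x p :
  has_vertex_at n x p = true <->
  exists u v, p = u ++ v /\ (x + total_width u)%nat = n.
Proof.
  revert x; induction p as [|s p IH]; intros x; simpl.
  - rewrite orb_false_r, Nat.eqb_eq. split.
    + intros <-. exists [], []. split; [reflexivity|cbn; lia].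
    + intros [[|t u] [v [E Hw]]]; [cbn in Hw; lia|discriminate].
  - rewrite orb_true_iff, Nat.eqb_eq, IH. split.
    + intros [<-|[u [v [-> Hw]]]].
      * exists [], (s :: p). split; [reflexivity|cbn; lia].
      * exists (s :: u), v. rewrite total_width_cons. split; [reflexivity|lia].
    + intros [[|t u] [v [E Hw]]].
      * left. cbn in Hw. lia.
      * right. injection E as -> ->. exists u, v.
        rewrite total_width_cons in Hw. split; [reflexivity|lia].
Qed.

Lemma list_step_eqb_spec p q : list_step_eqb p q = true <-> p = q.
Proof.
  revert q; induction p as [|a p IH]; intros [|b q]; simpl;
    try (split; congruence).
  rewrite andb_true_iff, IH.
  split; [intros [Hab ->]; destruct a, b; easy|intros E; injection E as <- <-].
  destruct a; auto.
Qed.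

Lemma reflect_app p q : Defs.reflect (p ++ q) = Defs.reflect q ++ Defs.reflect p.
Proof. unfold Defs.reflect. rewrite map_app. apply rev_app_distr. Qed.

Lemma reflect_involutive p : Defs.reflect (Defs.reflect p) = p.
Proof.
  unfold Defs.reflect. rewrite map_rev, rev_involutive, map_map.
  rewrite <- map_id. apply map_ext. intros []; reflexivity.
Qed.

Lemma total_width_reflect p : total_width (Defs.reflect p) = total_width p.
Proof.
  unfold total_width, Defs.reflect. rewrite map_rev, map_map.
  induction p as [|s p IH]; [reflexivity|].
  simpl. rewrite list_sum_app, IH. destruct s; simpl; lia.
Qed.

Lemma app_inj_width p q p' q' :
  total_width p = total_width p' -> p ++ q = p' ++ q' -> p = p' /\ q = q'.
Proof.
  revert p'; induction p as [|s p IH]; intros [|t p'] Hw E; simpl in E.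
  - auto.
  - rewrite total_width_cons in Hw. destruct t; cbn in Hw; lia.
  - rewrite total_width_cons in Hw. destruct s; cbn in Hw; lia.
  - injection E as <- E. rewrite !total_width_cons in Hw.
    destruct (IH p' ltac:(lia) E) as [-> ->]. auto.
Qed.

Lemma symmetric_split n p :
  total_width p = (2 * n)%nat ->
  symmetricb n p = true <->
  exists u, p = u ++ Defs.reflect u /\ total_width u = n.
Proof.
  intros Hp. unfold symmetricb. rewrite andb_true_iff, has_vertex_at_spec, list_step_eqb_spec.
  split.
  - intros [[u [v [-> Hw]]] Hsym]. exists u. split; [|lia]. f_equal.
    rewrite total_width_app in Hp. rewrite reflect_app in Hsym.
    apply app_inj_width in Hsym as [Hu _]; [|rewrite total_width_reflect; lia].
    rewrite <- Hu, reflect_involutive. reflexivity.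
  - intros [u [-> Hw]]. split.
    + exists u, (Defs.reflect u). split; [reflexivity|lia].
    + rewrite reflect_app, reflect_involutive. reflexivity.
Qed.

Lemma count_symmetric (Q : list step -> bool) n :
  count_words (fun p => Q p && symmetricb n p) (2 * n) =
  count_words (fun u => Q (u ++ Defs.reflect u)) n.
Proof.
  unfold count_words.
  rewrite <- (length_map (fun u => u ++ Defs.reflect u)
               (filter (fun u => Q (u ++ Defs.reflect u)) (words n))).
  apply Permutation_length, NoDup_Permutation.
  - apply NoDup_filter, NoDup_words.
  - apply Injective_map_NoDup_in; [|apply NoDup_filter, NoDup_words].
    intros u v Hu Hv E.
    apply filter_In in Hu as [Hu _]; apply filter_In in Hv as [Hv _].
    apply in_words in Hu, Hv. refine (proj1 (app_inj_width u _ v _ _ E)). lia.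
  - intros p. rewrite filter_In, in_map_iff, andb_true_iff, in_words. split.
    + intros [Hp [HQ Hs]]. apply (symmetric_split n p Hp) in Hs as [u [-> Hu]].
      exists u. rewrite filter_In, in_words. auto.
    + intros [u [<- Hu]]. rewrite filter_In, in_words in Hu. destruct Hu as [Hu HQ].
      assert (Hw : total_width (u ++ Defs.reflect u) = (2 * n)%nat)
        by (rewrite total_width_app, total_width_reflect; lia).
      repeat split; [exact Hw|exact HQ|]. apply (symmetric_split n _ Hw). eauto.
Qed.

Definition step_height (h : nat) (s : step) : option nat :=
  match s, h with
  | U, _ => Some (S h)
  | Defs.D, O => None
  | Defs.D, S h' => Some h'
  | H, _ => Some h
  end.

Fixpoint walk (h : nat) (p : list step) : option nat :=
  match p with
  | [] => Some h
  | s :: q => match step_height h s with None => None | Some h' => walk h' q end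
  end.

Definition stays_nonneg (h : nat) (p : list step) : bool :=
  match walk h p with Some _ => true | None => false end.

Lemma nonneg_ends0_walk p h :
  nonneg_ends0 h p = match walk h p with Some O => true | _ => false end.
Proof.
  revert h; induction p as [|s p IH]; intros h; simpl.
  - destruct h; reflexivity.
  - destruct s, h; simpl; auto.
Qed.

Lemma walk_app p q h :
  walk h (p ++ q) = match walk h p with None => None | Some h' => walk h' q end.
Proof.
  revert h; induction p as [|s p IH]; intros h; simpl; [reflexivity|].
  destruct (step_height h s); auto.
Qed.

Lemma walk_reflect p h h' : walk h p = Some h' -> walk h' (Defs.reflect p) = Some h.
Proof.
  revert h; induction p as [|s p IH]; intros h Hp; simpl in Hp.
  - injection Hp as <-. reflexivity.
  - change (Defs.reflect (s :: p)) with (Defs.reflect p ++ [flip s]). rewrite walk_app.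
    destruct (step_height h s) as [h1|] eqn:E; [|discriminate].
    rewrite (IH h1 Hp).
    destruct s, h; simpl in E; try discriminate; injection E as <-; reflexivity.
Qed.

Lemma nonneg_ends0_mirror u : nonneg_ends0 0 (u ++ Defs.reflect u) = stays_nonneg 0 u.
Proof.
  rewrite nonneg_ends0_walk, walk_app. unfold stays_nonneg.
  destruct (walk 0 u) eqn:E; [|reflexivity]. rewrite (walk_reflect _ _ _ E). reflexivity.
Qed.

Definition no_flat (p : list step) : bool := forallb (fun s => negb (step_eqb s H)) p.

Lemma no_flat_mirror u : no_flat (u ++ Defs.reflect u) = no_flat u.
Proof.
  assert (Hrefl : no_flat (Defs.reflect u) = no_flat u).
  { induction u as [|s u IH]; [reflexivity|].
    change (Defs.reflect (s :: u)) with (Defs.reflect u ++ [flip s]).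
    unfold no_flat in *. rewrite forallb_app, IH, andb_comm. destruct s; reflexivity. }
  unfold no_flat in *. rewrite forallb_app, Hrefl. apply andb_diag.
Qed.

Definition dyck_prefixes (m h : nat) : nat :=
  count_words (fun u => stays_nonneg h u && no_flat u) m.

Definition schroeder_prefixes (m h : nat) : nat := count_words (stays_nonneg h) m.

Lemma dsym_dyck_prefixes n : dsym n = dyck_prefixes n 0.
Proof.
  refine (eq_trans (count_symmetric dyckb n) _).
  apply count_words_ext. intros u.
  unfold dyckb. fold (no_flat (u ++ Defs.reflect u)).
  rewrite nonneg_ends0_mirror, no_flat_mirror. reflexivity.
Qed.

Lemma ssym_schroeder_prefixes n : ssym n = schroeder_prefixes n 0.
Proof.
  refine (eq_trans (count_symmetric schroederb n) _).
  apply count_words_ext. apply nonneg_ends0_mirror.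
Qed.

Lemma dyck_prefixes_S m h :
  dyck_prefixes (S m) h =
  (dyck_prefixes m (S h) + match h with O => O | S h' => dyck_prefixes m h' end)%nat.
Proof.
  unfold dyck_prefixes. rewrite count_words_S.
  replace (match m with O => O | S m' => _ end) with O
    by (destruct m; [reflexivity|]; symmetry; apply count_words_false;
        intros u; apply andb_false_r).
  rewrite Nat.add_0_r. destruct h; [|reflexivity].
  rewrite (count_words_false (fun u => stays_nonneg 0 (Defs.D :: u) && _) m)
    by reflexivity.
  rewrite !Nat.add_0_r. reflexivity.
Qed.

Lemma schroeder_prefixes_S m h :
  schroeder_prefixes (S m) h =
  (schroeder_prefixes m (S h) + match h with O => O | S h' => schroeder_prefixes m h' end +
   match m with O => O | S m' => schroeder_prefixes m' h end)%nat.
Proof.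
  unfold schroeder_prefixes. rewrite count_words_S.
  destruct h; [|reflexivity].
  rewrite (count_words_false (fun u => stays_nonneg 0 (Defs.D :: u)) m) by reflexivity.
  reflexivity.
Qed.

Definition ballot (k i : nat) : R :=
  INR (k + 1) * INR (fact (k + 2 * i)) / (INR (fact i) * INR (fact (k + i + 1))).

Lemma dnk_ballot k i : dnk (k + 2 * i) k = ballot k i.
Proof.
  unfold dnk, ballot, Binomial.C.
  replace (k <=? k + 2 * i)%nat with true by (symmetry; apply Nat.leb_le; lia).
  replace (k + 2 * i - k)%nat with (i * 2)%nat by lia.
  rewrite Nat.even_mul, orb_true_r, Nat.div_mul by lia. simpl andb. cbv iota.
  replace (k + 2 * i + 1 - i)%nat with (k + i + 1)%nat by lia.
  replace (k + 2 * i + 1)%nat with (S (k + 2 * i)) by lia.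
  change (fact (S (k + 2 * i))) with (S (k + 2 * i) * fact (k + 2 * i))%nat.
  rewrite mult_INR.
  assert (INR (S (k + 2 * i)) <> 0) by (apply not_0_INR; lia).
  pose proof (INR_fact_neq_0 i). pose proof (INR_fact_neq_0 (k + i + 1)).
  field. auto.
Qed.

Lemma dnk_off_parity n k : (forall i, n <> (k + 2 * i)%nat) -> dnk n k = 0.
Proof.
  intros Hn. unfold dnk.
  destruct (k <=? n)%nat eqn:Hle; [|reflexivity].
  destruct (Nat.even (n - k)) eqn:Hev; [|reflexivity].
  apply Nat.leb_le in Hle. apply Nat.even_spec in Hev as [i Hi].
  exfalso. apply (Hn i). lia.
Qed.

Lemma parity_cases n k : (exists i, n = (k + 2 * i)%nat) \/ (forall i, n <> (k + 2 * i)%nat).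
Proof.
  destruct (le_lt_dec k n) as [Hle|Hlt]; [|right; intros i; lia].
  destruct (Nat.Even_or_Odd (n - k)) as [[i Hi]|[i Hi]].
  - left. exists i. lia.
  - right. intros j. lia.
Qed.

Lemma ballot_0 k : ballot k 0 = 1.
Proof.
  unfold ballot. rewrite Nat.mul_0_r, !Nat.add_0_r.
  rewrite Nat.add_1_r.
  change (fact (S k)) with (S k * fact k)%nat. rewrite mult_INR, S_INR.
  pose proof (INR_fact_neq_0 k). pose proof (pos_INR k).
  simpl. field. lra.
Qed.

Lemma ballot_0_S i : ballot 0 (S i) = ballot 1 i.
Proof.
  unfold ballot.
  replace (0 + 2 * S i)%nat with (S (S (2 * i))) by lia.
  replace (1 + 2 * i)%nat with (S (2 * i)) by lia.
  replace (0 + S i + 1)%nat with (S (S i)) by lia.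
  replace (1 + i + 1)%nat with (S (S i)) by lia.
  change (fact (S (S (2 * i)))) with (S (S (2 * i)) * fact (S (2 * i)))%nat.
  change (fact (S i)) with (S i * fact i)%nat.
  rewrite !mult_INR, !S_INR, !mult_INR.
  pose proof (INR_fact_neq_0 (S (2 * i))). pose proof (INR_fact_neq_0 i).
  pose proof (INR_fact_neq_0 (S (S i))). pose proof (pos_INR i).
  simpl. field. repeat split; auto; lra.
Qed.

Lemma ballot_S_S k i : ballot (S k) (S i) = ballot k (S i) + ballot (S (S k)) i.
Proof.
  unfold ballot.
  replace (S k + 2 * S i)%nat with (S (k + 2 * i + 2)) by lia.
  replace (k + 2 * S i)%nat with (k + 2 * i + 2)%nat by lia.
  replace (S (S k) + 2 * i)%nat with (k + 2 * i + 2)%nat by lia.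
  replace (S k + S i + 1)%nat with (S (k + i + 2)) by lia.
  replace (k + S i + 1)%nat with (k + i + 2)%nat by lia.
  replace (S (S k) + i + 1)%nat with (S (k + i + 2)) by lia.
  change (fact (S (k + 2 * i + 2))) with (S (k + 2 * i + 2) * fact (k + 2 * i + 2))%nat.
  change (fact (S i)) with (S i * fact i)%nat.
  change (fact (S (k + i + 2))) with (S (k + i + 2) * fact (k + i + 2))%nat.
  pose proof (INR_fact_neq_0 (k + 2 * i + 2)). pose proof (INR_fact_neq_0 i).
  pose proof (INR_fact_neq_0 (k + i + 2)). pose proof (pos_INR i). pose proof (pos_INR k).
  repeat rewrite ?S_INR, ?plus_INR, ?mult_INR. simpl (INR 0). simpl (INR 1).
  field. repeat split; auto; lra.
Qed.

(* [e = 1] gives [dnk] back, [e = -1] the signed coefficients of the identity. *)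
Definition signed_dnk (e : R) (n k : nat) : R := e ^ ((n - k) / 2) * dnk n k.

Lemma signed_dnk_ballot e k i : signed_dnk e (k + 2 * i) k = e ^ i * ballot k i.
Proof.
  unfold signed_dnk. rewrite dnk_ballot.
  replace (k + 2 * i - k)%nat with (i * 2)%nat by lia. rewrite Nat.div_mul by lia.
  reflexivity.
Qed.

Lemma signed_dnk_off_parity e n k :
  (forall i, n <> (k + 2 * i)%nat) -> signed_dnk e n k = 0.
Proof. intros Hn. unfold signed_dnk. rewrite dnk_off_parity by exact Hn. ring. Qed.

Lemma signed_dnk_gt e n k : (n < k)%nat -> signed_dnk e n k = 0.
Proof. intros Hnk. apply signed_dnk_off_parity. intros i. lia. Qed.

Lemma signed_dnk_diag e n : signed_dnk e n n = 1.
Proof.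
  rewrite <- (Nat.add_0_r n) at 1. change 0%nat with (2 * 0)%nat at 1.
  rewrite signed_dnk_ballot, ballot_0. ring.
Qed.

Lemma signed_dnk_0 e k : signed_dnk e 0 k = match k with O => 1 | S _ => 0 end.
Proof. destruct k; [apply signed_dnk_diag|apply signed_dnk_gt; lia]. Qed.

Lemma signed_dnk_S e n k :
  signed_dnk e (S n) k =
  match k with O => 0 | S k' => signed_dnk e n k' end + e * signed_dnk e n (S k).
Proof.
  destruct (parity_cases (S n) k) as [[[|i] Hi]|Hodd].
  - rewrite Nat.add_0_r in Hi. subst k.
    rewrite !signed_dnk_diag, (signed_dnk_gt e n (S (S n))) by lia. ring.
  - destruct k as [|k].
    + assert (En : n = (1 + 2 * i)%nat) by lia. rewrite Hi, En.
      rewrite (signed_dnk_ballot e 0 (S i)), (signed_dnk_ballot e 1 i), ballot_0_S.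
      simpl. ring.
    + assert (En : n = (k + 2 * S i)%nat) by lia.
      assert (En' : n = (S (S k) + 2 * i)%nat) by lia.
      rewrite Hi, En at 1. rewrite En'.
      rewrite !signed_dnk_ballot, ballot_S_S. simpl. ring.
  - rewrite signed_dnk_off_parity by exact Hodd.
    rewrite (signed_dnk_off_parity e n (S k)) by (intros i Hi; apply (Hodd (S i)); lia).
    destruct k as [|k]; [ring|].
    rewrite signed_dnk_off_parity by (intros i Hi; apply (Hodd i); lia). ring.
Qed.

Lemma dnk_signed n k : dnk n k = signed_dnk 1 n k.
Proof. unfold signed_dnk. rewrite pow1. ring. Qed.

Lemma sum_f_R0_shift (f : nat -> R) N :
  sum_f_R0 (fun k => match k with O => 0 | S k' => f k' end) (S N) = sum_f_R0 f N.
Proof. induction N as [|N IH]; simpl in *; [ring|]. rewrite IH. reflexivity. Qed.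

Lemma sum_f_R0_head (g : nat -> R) N : (forall k, g (S k) = 0) -> sum_f_R0 g N = g O.
Proof. intros Hg. induction N as [|N IH]; simpl; [reflexivity|]. rewrite IH, Hg. ring. Qed.

Lemma sum_f_R0_last_zero (g : nat -> R) N : g (S N) = 0 -> sum_f_R0 g (S N) = sum_f_R0 g N.
Proof. intros Hg. simpl. rewrite Hg. ring. Qed.

Lemma signed_dnk_prefix_sum n h N :
  (n <= N)%nat ->
  sum_f_R0 (fun k => signed_dnk (-1) n k * INR (schroeder_prefixes k h)) N =
  INR (dyck_prefixes n h).
Proof.
  revert h N; induction n as [|n IH]; intros h N HN.
  - rewrite sum_f_R0_head by (intros k; rewrite signed_dnk_0; ring).
    rewrite signed_dnk_0. simpl. ring.
  - destruct N as [|N]; [lia|].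
    set (a := signed_dnk (-1) n).
    set (s := fun h k => INR (schroeder_prefixes k h)).
    assert (Hhi : forall k, (n < k)%nat -> a k = 0) by (intros k Hk; apply signed_dnk_gt, Hk).
    set (T := sum_f_R0 (fun k => a (S k) * s h k) N).
    assert (Hdown : sum_f_R0 (fun k => match k with O => 0 | S k' => a k' end * s h k) (S N) =
                    INR (dyck_prefixes n (S h)) +
                    match h with O => 0 | S h' => INR (dyck_prefixes n h') end + T).
    { rewrite (sum_eq _ (fun k => match k with O => 0 | S k' => a k' * s h (S k') end))
        by (intros [|k] _; simpl; ring).
      rewrite sum_f_R0_shift.
      rewrite (sum_eq _ (fun j => a j * s (S h) j +
                                  a j * match h with O => 0 | S h' => s h' j end +
                                  a j * match j with O => 0 | S j' => s h j' end))
        by (intros j _; unfold s; rewrite schroeder_prefixes_S, !plus_INR;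
            destruct h, j; simpl; ring).
      rewrite !plus_sum. f_equal; [f_equal|].
      - apply IH. lia.
      - destruct h as [|h]; [|apply IH; lia].
        rewrite sum_f_R0_head; intros; ring.
      - unfold T. rewrite <- (sum_f_R0_shift (fun k => a (S k) * s h k)).
        rewrite sum_f_R0_last_zero by (simpl; rewrite Hhi by lia; ring).
        apply sum_eq. intros [|j] _; simpl; ring. }
    assert (Hup : sum_f_R0 (fun k => a (S k) * s h k) (S N) = T)
      by (apply sum_f_R0_last_zero; rewrite Hhi by lia; ring).
    rewrite (sum_eq _ (fun k => match k with O => 0 | S k' => a k' end * s h k -
                                a (S k) * s h k))
      by (intros k _; unfold a, s; rewrite signed_dnk_S; destruct k; ring).
    rewrite minus_sum, Hdown, Hup, dyck_prefixes_S, plus_INR.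
    destruct h; simpl; ring.
Qed.

Lemma dnk_0 k : dnk 0 k = match k with O => 1 | S _ => 0 end.
Proof. rewrite dnk_signed, signed_dnk_0. reflexivity. Qed.

Lemma dnk_S n k : dnk (S n) k = match k with O => 0 | S k' => dnk n k' end + dnk n (S k).
Proof. rewrite !dnk_signed, signed_dnk_S. destruct k; rewrite ?dnk_signed; ring. Qed.

Lemma dnk_bounds n k : 0 <= dnk n k <= 2 ^ n.
Proof.
  revert k; induction n as [|n IH]; intros k.
  - rewrite dnk_0. destruct k; simpl; lra.
  - rewrite dnk_S. destruct (IH (S k)). destruct k as [|k]; [simpl; lra|].
    destruct (IH k). simpl. lra.
Qed.

Lemma dnk_term_bound x n k : Rabs (dnk n k * x ^ n) <= (2 * Rabs x) ^ n.
Proof.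
  rewrite Rabs_mult, <- RPow_abs, Rpow_mult_distr.
  destruct (dnk_bounds n k). rewrite Rabs_pos_eq by lra.
  apply Rmult_le_compat_r; [apply pow_le, Rabs_pos|lra].
Qed.

Lemma ex_series_abs_dnk x k :
  Rabs x < / 2 -> ex_series (fun n => Rabs (dnk n k * x ^ n)).
Proof.
  intros Hx. pose proof (Rabs_pos x).
  apply (@ex_series_le R_AbsRing R_CompleteNormedModule _ (fun n => (2 * Rabs x) ^ n)).
  - intros n. change (norm (Rabs (dnk n k * x ^ n))) with (Rabs (Rabs (dnk n k * x ^ n))).
    rewrite Rabs_Rabsolu. apply dnk_term_bound.
  - apply ex_series_geom. rewrite Rabs_pos_eq; lra.
Qed.

Definition ballot_gf (x : R) (k : nat) : R := Series (fun n => dnk n k * x ^ n).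

Definition ballot_recurrence (x : R) (F : nat -> R) : Prop :=
  forall k, F k = match k with O => 1 | S k' => x * F k' end + x * F (S k).

Lemma ballot_gf_recurrence x : Rabs x < / 2 -> ballot_recurrence x (ballot_gf x).
Proof.
  intros Hx k.
  assert (Hex : forall j, ex_series (fun n => dnk n j * x ^ n))
    by (intros j; apply ex_series_Rabs, ex_series_abs_dnk, Hx).
  unfold ballot_gf at 1. rewrite Series_incr_1 by apply Hex.
  rewrite dnk_0. simpl pow.
  destruct k as [|k].
  - rewrite (Series_ext _ (fun n => x * (dnk n 1 * x ^ n)))
      by (intros n; rewrite dnk_S; simpl; ring).
    rewrite Series_scal_l. unfold ballot_gf. ring.
  - rewrite (Series_ext _ (fun n => x * (dnk n k * x ^ n + dnk n (S (S k)) * x ^ n)))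
      by (intros n; rewrite dnk_S; simpl; ring).
    rewrite Series_scal_l, Series_plus by apply Hex. unfold ballot_gf. ring.
Qed.

Lemma ballot_gf_bounded x k : Rabs x < / 2 -> Rabs (ballot_gf x k) <= / (1 - 2 * Rabs x).
Proof.
  intros Hx. pose proof (Rabs_pos x).
  unfold ballot_gf. eapply Rle_trans; [apply Series_Rabs, ex_series_abs_dnk, Hx|].
  rewrite <- Series_geom by (rewrite Rabs_pos_eq; lra).
  apply Series_le; [|apply ex_series_geom; rewrite Rabs_pos_eq; lra].
  intros n. split; [apply Rabs_pos|apply dnk_term_bound].
Qed.

Lemma ballot_recurrence_unique x F G :
  Rabs x < / 2 ->
  (exists B, forall k, Rabs (F k) <= B) -> (exists B, forall k, Rabs (G k) <= B) ->
  ballot_recurrence x F -> ballot_recurrence x G -> forall k, F k = G k.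
Proof.
  intros Hx [BF HF] [BG HG] RF RG.
  set (E := fun k => F k - G k).
  set (q := 2 * Rabs x).
  pose proof (Rabs_pos x).
  (* the difference solves the homogeneous recurrence, which contracts by [q] *)
  assert (Hdecay : forall m j, Rabs (E j) <= q ^ m * (BF + BG)).
  { induction m as [|m IH]; intros j.
    - unfold E. rewrite pow_O, Rmult_1_l. eapply Rle_trans; [apply Rabs_triang|].
      rewrite Rabs_Ropp. specialize (HF j). specialize (HG j). lra.
    - simpl pow. rewrite Rmult_assoc. set (C := q ^ m * (BF + BG)) in *.
      assert (0 <= C) by (eapply Rle_trans; [apply Rabs_pos|apply (IH O)]).
      unfold q. destruct j as [|j].
      + replace (E O) with (x * E 1%nat) by (unfold E; rewrite (RF O), (RG O); ring).
        rewrite Rabs_mult. pose proof (IH 1%nat). nra.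
      + replace (E (S j)) with (x * (E j + E (S (S j))))
          by (unfold E; rewrite (RF (S j)), (RG (S j)); ring).
        rewrite Rabs_mult. pose proof (Rabs_triang (E j) (E (S (S j)))).
        pose proof (IH j). pose proof (IH (S (S j))). nra. }
  intros k. apply Rminus_diag_uniq. fold (E k).
  apply Rabs_eq_0, Rle_antisym; [|apply Rabs_pos].
  assert (Hlim : Rbar_le (Rabs (E k)) (Rbar_mult 0 (BF + BG))).
  { apply (is_lim_seq_le (fun _ => Rabs (E k)) (fun m => q ^ m * (BF + BG))).
    - intros m. apply Hdecay.
    - apply is_lim_seq_const.
    - apply (is_lim_seq_scal_r (fun m => q ^ m)), is_lim_seq_geom.
      unfold q. rewrite Rabs_pos_eq; lra. }
  simpl in Hlim. lra.
Qed.

Lemma Ccat_fixpoint_bounds x :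
  Rabs x < / 2 ->
  Ccat (x ^ 2) = 1 + x ^ 2 * Ccat (x ^ 2) ^ 2 /\ 0 < Ccat (x ^ 2) <= 2.
Proof.
  intros Hx. unfold Ccat.
  destruct (Req_EM_T (x ^ 2) 0) as [E|E]; [rewrite E; lra|].
  assert (Ht : 0 < x ^ 2 < / 4).
  { pose proof (Rabs_pos x). rewrite <- (pow2_abs x). split; [|nra].
    assert (0 <= Rabs x ^ 2) by apply pow2_ge_0. rewrite pow2_abs in *. lra. }
  set (t := x ^ 2) in *.
  set (s := sqrt (1 - 4 * t)).
  assert (Hss : s * s = 1 - 4 * t) by (apply sqrt_sqrt; lra).
  assert (Hs : 0 <= s) by apply sqrt_pos.
  (* rationalizing the numerator removes the removable singularity at t = 0 *)
  assert (Hc : (1 - s) / (2 * t) = 2 / (1 + s)) by (field_simplify_eq; nra).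
  rewrite Hc. split; [field_simplify_eq; [nra|lra]|].
  split; [apply Rdiv_lt_0_compat; lra|].
  apply Rmult_le_reg_r with (1 + s); [lra|].
  unfold Rdiv. rewrite Rmult_assoc, Rinv_l by lra. lra.
Qed.

Definition catalan_power (x : R) (k : nat) : R := x ^ k * Ccat (x ^ 2) ^ (k + 1).

Lemma catalan_power_recurrence x : Rabs x < / 2 -> ballot_recurrence x (catalan_power x).
Proof.
  intros Hx k. destruct (Ccat_fixpoint_bounds x Hx) as [Hc _].
  unfold catalan_power. set (c := Ccat (x ^ 2)) in *.
  destruct k as [|k]; simpl; rewrite Hc at 1; ring.
Qed.

Lemma catalan_power_bounded x k : Rabs x < / 2 -> Rabs (catalan_power x k) <= 2.
Proof.
  intros Hx. destruct (Ccat_fixpoint_bounds x Hx) as [_ Hc].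
  unfold catalan_power. set (c := Ccat (x ^ 2)) in *.
  replace (x ^ k * c ^ (k + 1)) with ((x * c) ^ k * c)
    by (rewrite Rpow_mult_distr, Nat.add_1_r; simpl; ring).
  rewrite Rabs_mult, <- RPow_abs, (Rabs_pos_eq c) by lra.
  assert (Hxc : Rabs (x * c) <= 1)
    by (rewrite Rabs_mult, (Rabs_pos_eq c) by lra; pose proof (Rabs_pos x); nra).
  pose proof (pow_le (Rabs (x * c)) k (Rabs_pos _)).
  pose proof (pow_incr (Rabs (x * c)) 1 k (conj (Rabs_pos _) Hxc)).
  rewrite pow1 in *. nra.
Qed.

Lemma ballot_gf_catalan x k : Rabs x < / 2 -> ballot_gf x k = catalan_power x k.
Proof.
  intros Hx.
  apply ballot_recurrence_unique with x;
    auto using ballot_gf_recurrence, catalan_power_recurrence.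
  - exists (/ (1 - 2 * Rabs x)). intros j. apply ballot_gf_bounded, Hx.
  - exists 2. intros j. apply catalan_power_bounded, Hx.
Qed.

Theorem theorem3p4 :
  (forall n : nat,
      INR (dsym n) =
      sum_f_R0 (fun k => (-1) ^ ((n - k) / 2) * dnk n k * INR (ssym k)) n)
  /\
  (forall (k : nat) (x : R), Rabs x < / 2 ->
      is_series (fun n : nat => dnk n k * x ^ n) (x ^ k * (Ccat (x ^ 2)) ^ (k + 1))).
Proof.
  split.
  - intros n. rewrite dsym_dyck_prefixes, <- (signed_dnk_prefix_sum n 0 n) by lia.
    apply sum_eq. intros k _. rewrite ssym_schroeder_prefixes. reflexivity.
  - intros k x Hx. change (x ^ k * Ccat (x ^ 2) ^ (k + 1)) with (catalan_power x k).
    rewrite <- ballot_gf_catalan by exact Hx.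
    apply Series_correct, ex_series_Rabs, ex_series_abs_dnk, Hx.
Qed.
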